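(* Let $E>0$ and let $(H_0,h)$ be one of (a) $H_0=E(\sigma_z\otimes I_2\otimes I_2+I_2\otimes\sigma_z\otimes I_2+I_2\otimes I_2\otimes\sigma_z)$, $h=E\sigma_z$; (b) $H_0=E\sum_{k=1}^3(\sigma_x^{(k)}+\sigma_y^{(k)})$, $h=E(\sigma_x+\sigma_y)$, where $\sigma^{(k)}$ denotes $\sigma$ acting on qubit $k$ and identity elsewhere. Set $H_A=H_B=H_C=h$. Let $H_{\mathrm{int}}$ be any Hermitian operator on $(\mathbb{C}^2)^{\otimes3}$ and $H=H_0+H_{\mathrm{int}}$. For any three-qubit density matrix $\varrho$ with single-qubit reduced states $\varrho_A,\varrho_B,\varrho_C$, if $\mathcal{C}(\varrho;H)\ge\mathcal{C}(\varrho;H_0)$ then $$\mathcal{C}(\varrho_A;H_A)+\mathcal{C}(\varrho_B;H_B)+\mathcal{C}(\varrho_C;H_C)\le\mathcal{C}(\varrho;H).$$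
   Context: Quantum battery capacity: for Hermitian $H$ on $\mathbb{C}^d$ with eigenvalues $\epsilon_0\le\dots\le\epsilon_{d-1}$ and density matrix $\rho$ with eigenvalues $\lambda_0\le\dots\le\lambda_{d-1}$, $\mathcal{C}(\rho;H)=\sum_i\epsilon_i(\lambda_i-\lambda_{d-1-i})$. $\sigma_x,\sigma_y,\sigma_z$ are the Pauli matrices. *)

From HB Require Import structures.
From mathcomp Require Import all_boot all_order all_algebra.
From mathcomp Require Import mxtens.
Set Implicit Arguments. Unset Strict Implicit. Unset Printing Implicit Defensive.
Import Order.TTheory GRing.Theory Num.Theory Num.Def.
Local Open Scope ring_scope.

Section Defs.
Variable C : numClosedFieldType.

(* eigenvalues (with multiplicity) of a square matrix, sorted increasingly;
   spectral_diag is MathComp's spectral decomposition A = P^-1 diag(d) P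
   (P unitary), valid for normal, in particular Hermitian, matrices *)
Definition eigs n (A : 'M[C]_n) : seq C :=
  sort <=%R [seq spectral_diag A 0 i | i <- enum 'I_n].

Definition capacity n (rho H : 'M[C]_n) : C :=
  \sum_(i < n) nth 0 (eigs H) i *
                 (nth 0 (eigs rho) i - nth 0 (eigs rho) (n - 1 - i)%N).

Definition psdmx n (A : 'M[C]_n) : Prop :=
  A \is hermsymmx /\ forall v : 'rV[C]_n, 0 <= (v *m A *m (map_mx conjC v)^T) 0 0.

Definition density n (rho : 'M[C]_n) : Prop := psdmx rho /\ \tr rho = 1.

(* 2x2 matrix [[a, b], [c, d]] (row index 0 = |0>) *)
Definition mx2 (a b c d : C) : 'M[C]_2 :=
  \matrix_(i < 2, j < 2)
     nth 0 (nth [::] [:: [:: a; b]; [:: c; d]] i) j.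

Definition sigma_x : 'M[C]_2 := mx2 0 1 1 0.
Definition sigma_y : 'M[C]_2 := mx2 0 (- 'i) 'i 0.
Definition sigma_z : 'M[C]_2 := mx2 1 0 0 (-1).
Definition I2 : 'M[C]_2 := 1%:M.

(* three qubits A B C: (C^2 ⊗ C^2) ⊗ C^2, Kronecker product *t from mxtens *)
Definition on1 (s : 'M[C]_2) : 'M[C]_(2 * 2 * 2) := s *t I2 *t I2.
Definition on2 (s : 'M[C]_2) : 'M[C]_(2 * 2 * 2) := I2 *t s *t I2.
Definition on3 (s : 'M[C]_2) : 'M[C]_(2 * 2 * 2) := I2 *t I2 *t s.

(* basis index |a b c> consistent with the ordering of *t *)
Definition idx3 (a b c : 'I_2) : 'I_(2 * 2 * 2) :=
  mxtens_index (mxtens_index (a, b), c).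

Definition ptrA (rho : 'M[C]_(2 * 2 * 2)) : 'M[C]_2 :=
  \matrix_(i, j) \sum_(b < 2) \sum_(c < 2) rho (idx3 i b c) (idx3 j b c).
Definition ptrB (rho : 'M[C]_(2 * 2 * 2)) : 'M[C]_2 :=
  \matrix_(i, j) \sum_(a < 2) \sum_(c < 2) rho (idx3 a i c) (idx3 a j c).
Definition ptrC (rho : 'M[C]_(2 * 2 * 2)) : 'M[C]_2 :=
  \matrix_(i, j) \sum_(a < 2) \sum_(b < 2) rho (idx3 a b i) (idx3 a b j).

Definition H0a (E : C) : 'M[C]_(2 * 2 * 2) :=
  E *: (on1 sigma_z + on2 sigma_z + on3 sigma_z).
Definition ha (E : C) : 'M[C]_2 := E *: sigma_z.
Definition H0b (E : C) : 'M[C]_(2 * 2 * 2) :=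
  E *: ((on1 sigma_x + on1 sigma_y) + (on2 sigma_x + on2 sigma_y)
        + (on3 sigma_x + on3 sigma_y)).
Definition hb (E : C) : 'M[C]_2 := E *: (sigma_x + sigma_y).

End Defs.

From mathcomp Require Import all_boot all_order all_algebra all_fingroup.
From mathcomp Require Import mxtens sesquilinear spectral ring zify.
Import Order.TTheory GRing.Theory Num.Theory Num.Def.
Local Open Scope ring_scope.
Set Implicit Arguments. Unset Strict Implicit.

(* The capacity is a maximum of trace differences:
   C(rho; H) = max_{W1, W2 unitary} tr(rho W1 H W1^-1) - tr(rho W2 H W2^-1),
   by von Neumann's trace inequality (which reduces, via the doubly stochastic
   matrix |<u_i|W|v_j>|^2, to a rearrangement inequality) and the fact that
   permuting eigenbases attains both bounds.  When H0 = h(1) + h(2) + h(3) is a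
   sum of identical local terms, taking W1, W2 to be tensor products of local
   optimizers splits the trace difference into the local ones on the reduced
   states, so the sum of the local capacities is at most C(rho; H0), which is
   at most C(rho; H) by hypothesis. *)

Section DoublyStochastic.
Variable R : numDomainType.

Definition doubly_stochastic n (S : 'M[R]_n) :=
  [/\ forall i j, 0 <= S i j, forall i, \sum_j S i j = 1
    & forall j, \sum_i S i j = 1].

Definition nondecreasing_upto n (a : nat -> R) :=
  forall i j, (i <= j)%N -> (j < n)%N -> a i <= a j.

(* The weights w i = \sum_(j < k) S i j lie in [0, 1] and have total k, like
   the indicator of i < k; both are compared with the threshold a (min k n.-1). *)
Lemma doubly_stochastic_prefix_ge n (a : nat -> R) (S : 'M[R]_n) k :
  nondecreasing_upto n a -> doubly_stochastic S -> (k <= n)%N ->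
  \sum_(i < n) a i * (i < k)%:R <=
  \sum_(i < n) a i * \sum_(j < n) S i j * (j < k)%:R.
Proof.
move=> ha [hS hr hc] hk.
set w := fun i : 'I_n => \sum_(j < n) S i j * (j < k)%:R.
set m := a (minn k n.-1).
have sum_w : \sum_(i < n) w i = \sum_(i < n) (i < k)%:R.
  rewrite /w exchange_big /=; apply: eq_bigr => j _.
  by rewrite -mulr_suml hc mul1r.
have w_le1 i : w i <= 1.
  rewrite -(hr i) /w; apply: ler_sum => j _.
  by case: (j < k)%N; rewrite ?mulr1 ?mulr0.
have w_ge0 i : 0 <= w i.
  by apply: sumr_ge0 => j _; apply: mulr_ge0 => //; apply: ler0n.
have threshold : 0 <= \sum_(i < n) (a i - m) * (w i - (i < k)%:R).
  apply: sumr_ge0 => i _; have := ltn_ord i; case: (ltnP i k) => hik hi.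
    by apply: mulr_le0; rewrite subr_le0 // ; apply: ha; lia.
  by rewrite subr0; apply: mulr_ge0; rewrite // subr_ge0; apply: ha; lia.
rewrite -subr_ge0 -sumrB.
have -> : \sum_(i < n) (a i * w i - a i * (i < k)%:R) =
   \sum_(i < n) ((a i - m) * (w i - (i < k)%:R) + m * (w i - (i < k)%:R)).
  by apply: eq_bigr => i _; ring.
by rewrite big_split /= -mulr_sumr sumrB sum_w subrr mulr0 addr0.
Qed.

Lemma abel_sum_le0 n (b D : nat -> R) :
  nondecreasing_upto n b -> (forall k, (k <= n)%N -> 0 <= \sum_(j < k) D j) ->
  \sum_(j < n) D j = 0 -> \sum_(j < n) b j * D j <= 0.
Proof.
case: n => [|n] hb hD hD0; first by rewrite big_ord0.
suff partial k : (k < n.+1)%N ->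
    \sum_(j < k.+1) b j * D j <= b k * \sum_(j < k.+1) D j.
  by have := partial n (ltnSn n); rewrite hD0 mulr0.
elim: k => [|k IH] hk; first by rewrite !big_ord1.
rewrite big_ord_recr /= [X in _ <= _ * X]big_ord_recr /= mulrDr lerD //.
apply: le_trans (IH (ltnW hk)) _.
by apply: ler_wpM2r; [apply: hD; apply: ltnW | apply: hb].
Qed.

(* Abel summation against D j = \sum_i a i * S i j - a j, whose prefix sums are
   nonnegative by the previous lemma and whose total is 0. *)
Lemma doubly_stochastic_rearrangement_le n (a b : nat -> R) (S : 'M[R]_n) :
  nondecreasing_upto n a -> nondecreasing_upto n b -> doubly_stochastic S ->
  \sum_(i < n) \sum_(j < n) a i * b j * S i j <= \sum_(i < n) a i * b i.
Proof.
case: n S => [|n] S ha hb hS; first by rewrite !big_ord0.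
have [_ hr _] := hS.
set D := fun j : nat => \sum_(i < n.+1) a i * S i (inord j) - a j.
have sum_D k : (k <= n.+1)%N -> \sum_(j < k) D j =
    \sum_(i < n.+1) a i * \sum_(j < n.+1) S i j * (j < k)%:R
    - \sum_(i < n.+1) a i * (i < k)%:R.
  move=> hk; have widen (F : nat -> R) :
      \sum_(j < k) F j = \sum_(j < n.+1) F j * (j < k)%:R.
    rewrite (big_ord_widen _ _ hk) big_mkcond /=.
    by apply: eq_bigr => j _; case: (j < k)%N; rewrite ?mulr1 ?mulr0.
  rewrite widen /D.
  under eq_bigr => j _ do rewrite mulrBl inord_val.
  rewrite sumrB; congr (_ - _).
  under eq_bigr => j _ do rewrite mulr_suml.
  rewrite exchange_big /=; apply: eq_bigr => i _.
  by rewrite mulr_sumr; apply: eq_bigr => j _; rewrite mulrA.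
have := @abel_sum_le0 n.+1 b D hb.
have -> : \sum_(j < n.+1) b j * D j =
    \sum_(i < n.+1) \sum_(j < n.+1) a i * b j * S i j
    - \sum_(i < n.+1) a i * b i.
  under eq_bigr => j _ do rewrite /D mulrBr inord_val.
  rewrite sumrB; congr (_ - _); last by apply: eq_bigr => i _; rewrite mulrC.
  rewrite exchange_big /=; apply: eq_bigr => j _; rewrite mulr_sumr.
  by apply: eq_bigr => i _; ring.
rewrite subr_le0; apply.
  by move=> k hk; rewrite sum_D // subr_ge0; apply: doubly_stochastic_prefix_ge.
rewrite sum_D //.
under eq_bigr => i _ do under eq_bigr => j _ do rewrite ltn_ord mulr1.
under [X in _ - X]eq_bigr => i _ do rewrite ltn_ord mulr1.
by under eq_bigr => i _ do rewrite hr mulr1; rewrite subrr.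
Qed.

(* Reversing the columns of S turns the bound for [b] into one for the
   nondecreasing sequence [j |-> - b (n - 1 - j)]. *)
Lemma doubly_stochastic_rearrangement_ge n (a b : nat -> R) (S : 'M[R]_n) :
  nondecreasing_upto n a -> nondecreasing_upto n b -> doubly_stochastic S ->
  \sum_(i < n) a i * b (n - 1 - i)%N <=
  \sum_(i < n) \sum_(j < n) a i * b j * S i j.
Proof.
move=> ha hb [hS hr hc].
have sum_rev (F : 'I_n -> R) : \sum_(j < n) F (rev_ord j) = \sum_(j < n) F j.
  by rewrite [RHS](reindex_inj rev_ord_inj).
have rev_idx (j : 'I_n) : (n - 1 - rev_ord j)%N = j.
  by rewrite /=; have := ltn_ord j; lia.
have Srev : doubly_stochastic (\matrix_(i, j) S i (rev_ord j)).
  split=> [i j|i|j]; rewrite ?mxE //.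
    by under eq_bigr => j _ do rewrite mxE; rewrite (sum_rev (S i)).
  by under eq_bigr => i _ do rewrite mxE.
have := doubly_stochastic_rearrangement_le
  (b := fun j => - b (n - 1 - j)%N) ha _ Srev.
have -> : \sum_(i < n) \sum_(j < n)
      a i * - b (n - 1 - j)%N * (\matrix_(i, j) S i (rev_ord j)) i j =
    - \sum_(i < n) \sum_(j < n) a i * b j * S i j.
  rewrite -sumrN; apply: eq_bigr => i _; rewrite -sumrN -sum_rev.
  by apply: eq_bigr => j _; rewrite mxE rev_idx rev_ordK mulrN mulNr.
have -> : \sum_(i < n) a i * - b (n - 1 - i)%N =
    - \sum_(i < n) a i * b (n - 1 - i)%N.
  by rewrite -sumrN; apply: eq_bigr => i _; rewrite mulrN.
by rewrite lerN2; apply=> i j hij hj; rewrite lerN2; apply: hb; lia.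
Qed.

End DoublyStochastic.

Section VonNeumann.
Variable C : numClosedFieldType.
Local Open Scope sesquilinear_scope.

Lemma hermitian_spectralE n (A : 'M[C]_n) : A \is hermsymmx ->
  A = (spectralmx A)^t* *m diag_mx (spectral_diag A) *m spectralmx A.
Proof.
move=> hA; have /orthomx_spectralP {1}-> := hermitian_normalmx hA.
by rewrite invmx_unitary // spectral_unitarymx.
Qed.

Lemma eigs_nondecreasing n (A : 'M[C]_n) : A \is hermsymmx ->
  nondecreasing_upto n (nth 0 (eigs A)).
Proof.
move=> hA i j hij hj.
have sorted_eigs : sorted <=%R (eigs A).
  apply: (@sort_sorted_in _ Num.real); first by move=> x y hx hy; apply: real_leVge.
  apply/allP => x /mapP [k _ ->].
  by move/hermitian_spectral_diag_real/mxOverP: hA; apply.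
have size_eigs : size (eigs A) = n by rewrite size_sort size_map size_enum_ord.
by apply: (sorted_leq_nth le_trans lexx) => //;
  rewrite inE size_eigs ?(leq_ltn_trans hij hj).
Qed.

Lemma eigs_spectral_perm n (A : 'M[C]_n) :
  exists s : 'S_n, forall i : 'I_n, nth 0 (eigs A) i = spectral_diag A 0 (s i).
Proof.
have : perm_eq (eigs A) [tuple spectral_diag A 0 i | i < n].
  by rewrite /eigs perm_sort /= perm_refl.
case/tuple_permP => s hs; exists s => i.
by rewrite hs -tnth_nth !tnth_mktuple.
Qed.

Lemma unitarymx_row_norm n (V : 'M[C]_n) : V \is unitarymx ->
  forall a, \sum_b V a b * (V a b)^* = 1.
Proof.
move=> /unitarymxP /matrixP hV a; have := hV a a.
by rewrite !mxE eqxx mulr1n => <-; apply: eq_bigr => b _; rewrite !mxE.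
Qed.

Lemma unitarymx_col_norm n (V : 'M[C]_n) : V \is unitarymx ->
  forall b, \sum_a V a b * (V a b)^* = 1.
Proof.
rewrite -trmxC_unitary => /unitarymx_row_norm hV b; rewrite -(hV b).
by apply: eq_bigr => a _; rewrite !mxE conjCK mulrC.
Qed.

(* In eigenbases of rho and M the trace becomes a bilinear form in the sorted
   eigenvalues, whose coefficients |V a b|^2 come from the unitary V below. *)
Lemma mxtrace_conj_eigsE n (rho M W : 'M[C]_n) (sr sm : 'S_n) :
  rho \is hermsymmx -> M \is hermsymmx ->
  (forall i : 'I_n, nth 0 (eigs rho) i = spectral_diag rho 0 (sr i)) ->
  (forall i : 'I_n, nth 0 (eigs M) i = spectral_diag M 0 (sm i)) ->
  let V := spectralmx rho *m W *m (spectralmx M)^t* in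
  \tr (rho *m (W *m M *m W^t*)) =
  \sum_(i < n) \sum_(j < n) nth 0 (eigs M) i * nth 0 (eigs rho) j *
       (V (sr j) (sm i) * (V (sr j) (sm i))^*).
Proof.
move=> hr hM hsr hsm V.
have -> : \tr (rho *m (W *m M *m W^t*)) =
    \tr (diag_mx (spectral_diag rho) *m V *m diag_mx (spectral_diag M) *m V^t*).
  rewrite /V {1}(hermitian_spectralE hr) {1}(hermitian_spectralE hM).
  by rewrite !trmx_mul !map_mxM trmxCK -!mulmxA mxtrace_mulC !mulmxA.
have -> : \tr (diag_mx (spectral_diag rho) *m V *m diag_mx (spectral_diag M) *m V^t*)
    = \sum_a \sum_b spectral_diag rho 0 a * spectral_diag M 0 b * (V a b * (V a b)^*).
  rewrite mul_diag_mx mul_mx_diag /mxtrace; apply: eq_bigr => a _; rewrite !mxE.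
  by apply: eq_bigr => b _; rewrite !mxE; ring.
rewrite exchange_big /= (reindex_inj (@perm_inj _ sm)) /=; apply: eq_bigr => i _.
rewrite (reindex_inj (@perm_inj _ sr)) /=; apply: eq_bigr => j _.
by rewrite hsr hsm; ring.
Qed.

Lemma mxtrace_conj_doubly_stochastic n (rho M W : 'M[C]_n) :
  rho \is hermsymmx -> M \is hermsymmx -> W \is unitarymx ->
  exists2 S : 'M[C]_n, doubly_stochastic S &
    \tr (rho *m (W *m M *m W^t*)) =
    \sum_(i < n) \sum_(j < n) nth 0 (eigs M) i * nth 0 (eigs rho) j * S i j.
Proof.
move=> hr hM hW.
have [sr hsr] := eigs_spectral_perm rho; have [sm hsm] := eigs_spectral_perm M.
rewrite (mxtrace_conj_eigsE W hr hM hsr hsm) /=.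
set V := spectralmx rho *m W *m (spectralmx M)^t*.
have hV : V \is unitarymx.
  by rewrite /V !mul_unitarymx ?trmxC_unitary ?spectral_unitarymx.
exists (\matrix_(i, j) (V (sr j) (sm i) * (V (sr j) (sm i))^*)); last first.
  by under [RHS]eq_bigr => i _ do under eq_bigr => j _ do rewrite mxE.
split=> [i j|i|j]; rewrite ?mxE ?mul_conjC_ge0 //.
  under eq_bigr => j _ do rewrite mxE.
  by rewrite -(unitarymx_col_norm hV (sm i)) [RHS](reindex_inj (@perm_inj _ sr)).
under eq_bigr => i _ do rewrite mxE.
by rewrite -(unitarymx_row_norm hV (sr j)) [RHS](reindex_inj (@perm_inj _ sm)).
Qed.

Lemma von_neumann_trace_le n (rho M W : 'M[C]_n) :
  rho \is hermsymmx -> M \is hermsymmx -> W \is unitarymx ->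
  \tr (rho *m (W *m M *m W^t*)) <=
  \sum_(i < n) nth 0 (eigs M) i * nth 0 (eigs rho) i.
Proof.
move=> hr hM hW; have [S hS ->] := mxtrace_conj_doubly_stochastic hr hM hW.
exact: doubly_stochastic_rearrangement_le (eigs_nondecreasing hM)
  (eigs_nondecreasing hr) hS.
Qed.

Lemma von_neumann_trace_ge n (rho M W : 'M[C]_n) :
  rho \is hermsymmx -> M \is hermsymmx -> W \is unitarymx ->
  \sum_(i < n) nth 0 (eigs M) i * nth 0 (eigs rho) (n - 1 - i)%N <=
  \tr (rho *m (W *m M *m W^t*)).
Proof.
move=> hr hM hW; have [S hS ->] := mxtrace_conj_doubly_stochastic hr hM hW.
exact: doubly_stochastic_rearrangement_ge (eigs_nondecreasing hM)
  (eigs_nondecreasing hr) hS.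
Qed.

Lemma perm_mx_unitary n (s : 'S_n) : (perm_mx s : 'M[C]_n) \is unitarymx.
Proof.
apply/unitarymxP; rewrite tr_perm_mx.
have -> : map_mx conjC (perm_mx s^-1) = perm_mx s^-1 :> 'M[C]_n.
  by apply/matrixP => i j; rewrite !mxE rmorph_nat.
by rewrite -perm_mxM mulgV perm_mx1.
Qed.

(* A permutation matrix between the eigenbases pairs the eigenvalues of M and
   rho along any prescribed permutation [g]. *)
Lemma mxtrace_conj_eigs_perm n (rho M : 'M[C]_n) (g : 'S_n) :
  rho \is hermsymmx -> M \is hermsymmx ->
  exists2 W, W \is unitarymx &
    \tr (rho *m (W *m M *m W^t*)) =
    \sum_(j < n) nth 0 (eigs M) (g j) * nth 0 (eigs rho) j.
Proof.
move=> hr hM.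
have [sr hsr] := eigs_spectral_perm rho; have [sm hsm] := eigs_spectral_perm M.
set Pi := perm_mx (sr^-1 * g * sm) : 'M[C]_n.
set W := (spectralmx rho)^t* *m Pi *m spectralmx M.
have hP := spectral_unitarymx rho; have hQ := spectral_unitarymx M.
exists W; first by rewrite /W !mul_unitarymx ?trmxC_unitary ?perm_mx_unitary.
rewrite (mxtrace_conj_eigsE W hr hM hsr hsm) /=.
have -> : spectralmx rho *m W *m (spectralmx M)^t* = Pi.
  by rewrite /W !mulmxA (unitarymxP hP) mul1mx -mulmxA (unitarymxP hQ) mulmx1.
rewrite exchange_big /=; apply: eq_bigr => j _.
rewrite (bigD1 (g j)) //= big1 ?addr0.
  by rewrite /Pi !mxE !permM permK eqxx mulr1n rmorph1 !mulr1.
move=> i hi; rewrite /Pi !mxE !permM permK (inj_eq perm_inj) eq_sym (negbTE hi).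
by rewrite mulr0n mul0r mulr0.
Qed.

Lemma capacity_ge_mxtrace_conjB n (rho M W1 W2 : 'M[C]_n) :
  rho \is hermsymmx -> M \is hermsymmx -> W1 \is unitarymx -> W2 \is unitarymx ->
  \tr (rho *m (W1 *m M *m W1^t*)) - \tr (rho *m (W2 *m M *m W2^t*))
    <= capacity rho M.
Proof.
move=> hr hM h1 h2; rewrite /capacity.
under eq_bigr => i _ do rewrite mulrBr.
by rewrite sumrB lerB ?von_neumann_trace_le ?von_neumann_trace_ge.
Qed.

Lemma capacity_mxtrace_conjB n (rho M : 'M[C]_n) :
  rho \is hermsymmx -> M \is hermsymmx ->
  exists W1 W2, [/\ W1 \is unitarymx, W2 \is unitarymx &
   capacity rho M =
   \tr (rho *m (W1 *m M *m W1^t*)) - \tr (rho *m (W2 *m M *m W2^t*))].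
Proof.
move=> hr hM.
have [W1 h1 e1] := mxtrace_conj_eigs_perm 1 hr hM.
have [W2 h2 e2] := mxtrace_conj_eigs_perm (perm (@rev_ord_inj n)) hr hM.
exists W1, W2; split => //; rewrite /capacity e1 e2.
under eq_bigr => i _ do rewrite mulrBr.
rewrite sumrB; congr (_ - _); first by apply: eq_bigr => j _; rewrite perm1.
rewrite [RHS](reindex_inj rev_ord_inj) /=; apply: eq_bigr => j _.
rewrite permE rev_ordK; congr (_ * nth 0 _ _).
by rewrite /=; have := ltn_ord j; lia.
Qed.

End VonNeumann.

Section PartialTrace.
Variable R : comPzRingType.

Lemma sum_mxtens_index m n (F : 'I_(m * n) -> R) :
  \sum_k F k = \sum_(i < m) \sum_(j < n) F (mxtens_index (i, j)).
Proof.
rewrite pair_big /= (reindex (@mxtens_index m n)) /=; first by apply: eq_bigr => -[].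
by exists (@mxtens_unindex m n) => k _; rewrite ?mxtens_indexK ?mxtens_unindexK.
Qed.

Lemma sum_mul_delta n (F : 'I_n -> R) b : \sum_(b' < n) F b' * (b' == b)%:R = F b.
Proof.
rewrite (bigD1 b) //= eqxx mulr1 big1 ?addr0 // => c /negbTE ->.
by rewrite mulr0.
Qed.

Lemma tensmx11 m n : (1%:M : 'M[R]_m) *t (1%:M : 'M[R]_n) = 1%:M.
Proof.
apply/matrixP => k l.
case: (mxtens_indexP k) => a b; case: (mxtens_indexP l) => a' b'.
rewrite tensmxE !mxE (inj_eq (can_inj (@mxtens_indexK m n))) xpair_eqE.
by case: (a == a'); case: (b == b'); rewrite ?mulr1 ?mulr0.
Qed.

Lemma tensmxZl m n p q a (A : 'M[R]_(m, n)) (B : 'M[R]_(p, q)) :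
  (a *: A) *t B = a *: (A *t B).
Proof. by apply/matrixP => i j; rewrite !mxE mulrA. Qed.

Lemma tensmxZr m n p q a (A : 'M[R]_(m, n)) (B : 'M[R]_(p, q)) :
  A *t (a *: B) = a *: (A *t B).
Proof. by apply/matrixP => i j; rewrite !mxE mulrCA. Qed.

Lemma tensmxDl m n p q (A A' : 'M[R]_(m, n)) (B : 'M[R]_(p, q)) :
  (A + A') *t B = A *t B + A' *t B.
Proof. by apply/matrixP => i j; rewrite !mxE mulrDl. Qed.

Lemma tensmxDr m n p q (A : 'M[R]_(m, n)) (B B' : 'M[R]_(p, q)) :
  A *t (B + B') = A *t B + A *t B'.
Proof. by apply/matrixP => i j; rewrite !mxE mulrDr. Qed.

Definition ptrace_snd m n (A : 'M[R]_(m * n)) : 'M[R]_m :=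
  \matrix_(i, j) \sum_(b < n) A (mxtens_index (i, b)) (mxtens_index (j, b)).

Definition ptrace_fst m n (A : 'M[R]_(m * n)) : 'M[R]_n :=
  \matrix_(i, j) \sum_(a < m) A (mxtens_index (a, i)) (mxtens_index (a, j)).

Lemma mxtrace_mul_tens1r m n (A : 'M[R]_(m * n)) (X : 'M[R]_m) :
  \tr (A *m (X *t (1%:M : 'M_n))) = \tr (ptrace_snd A *m X).
Proof.
rewrite /mxtrace sum_mxtens_index; apply: eq_bigr => i _.
under eq_bigr => b _ do rewrite !mxE sum_mxtens_index.
rewrite !mxE exchange_big /=; apply: eq_bigr => i' _.
rewrite !mxE mulr_suml; apply: eq_bigr => b _.
rewrite -[RHS](sum_mul_delta
  (fun b' => A (mxtens_index (i, b)) (mxtens_index (i', b')) * X i' i) b).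
by apply: eq_bigr => b' _; rewrite tensmxE !mxE mulrA.
Qed.

Lemma mxtrace_mul_tens1l m n (A : 'M[R]_(m * n)) (Y : 'M[R]_n) :
  \tr (A *m ((1%:M : 'M_m) *t Y)) = \tr (ptrace_fst A *m Y).
Proof.
rewrite /mxtrace sum_mxtens_index exchange_big /=; apply: eq_bigr => b _.
have diag_entry (a : 'I_m) :
    (A *m (1%:M *t Y)) (mxtens_index (a, b)) (mxtens_index (a, b))
    = \sum_(b' < n) A (mxtens_index (a, b)) (mxtens_index (a, b')) * Y b' b.
  rewrite !mxE sum_mxtens_index exchange_big /=; apply: eq_bigr => b' _.
  rewrite -[RHS](sum_mul_delta
    (fun a' => A (mxtens_index (a, b)) (mxtens_index (a', b')) * Y b' b) a).
  by apply: eq_bigr => a' _; rewrite tensmxE !mxE; ring.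
under eq_bigr => a _ do rewrite diag_entry.
rewrite exchange_big /= !mxE; apply: eq_bigr => b' _.
by rewrite !mxE mulr_suml.
Qed.

End PartialTrace.

Section ThreeQubits.
Variable C : numClosedFieldType.
Local Open Scope sesquilinear_scope.

Lemma hermsymmxP n (A : 'M[C]_n) :
  reflect (forall i j, A i j = (A j i)^*) (A \is hermsymmx).
Proof.
apply: (iffP idP) => [/is_hermitianmxP hA i j | hA].
  by rewrite {1}hA expr0 scale1r !mxE.
apply/is_hermitianmxP; rewrite expr0 scale1r.
by apply/matrixP => i j; rewrite !mxE hA.
Qed.

Lemma hermsymmxD n (A B : 'M[C]_n) :
  A \is hermsymmx -> B \is hermsymmx -> A + B \is hermsymmx.
Proof.
by move=> /hermsymmxP hA /hermsymmxP hB; apply/hermsymmxP => i j;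
  rewrite !mxE rmorphD hA hB.
Qed.

Lemma hermsymmxZ n (a : C) (A : 'M[C]_n) :
  a \is Num.real -> A \is hermsymmx -> a *: A \is hermsymmx.
Proof.
by move=> ha /hermsymmxP hA; apply/hermsymmxP => i j;
  rewrite !mxE rmorphM /= (conj_Creal ha) hA.
Qed.

Lemma hermsymmx_tens m n (A : 'M[C]_m) (B : 'M[C]_n) :
  A \is hermsymmx -> B \is hermsymmx -> A *t B \is hermsymmx.
Proof.
by move=> /hermsymmxP hA /hermsymmxP hB; apply/hermsymmxP => i j;
  rewrite !mxE rmorphM hA hB.
Qed.

Lemma hermsymmx_ptrace_snd m n (A : 'M[C]_(m * n)) :
  A \is hermsymmx -> ptrace_snd A \is hermsymmx.
Proof.
move=> /hermsymmxP hA; apply/hermsymmxP => i j.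
by rewrite !mxE rmorph_sum; apply: eq_bigr => b _; rewrite hA.
Qed.

Lemma hermsymmx_ptrace_fst m n (A : 'M[C]_(m * n)) :
  A \is hermsymmx -> ptrace_fst A \is hermsymmx.
Proof.
move=> /hermsymmxP hA; apply/hermsymmxP => i j.
by rewrite !mxE rmorph_sum; apply: eq_bigr => a _; rewrite hA.
Qed.

Lemma unitarymx_tens m n (A : 'M[C]_m) (B : 'M[C]_n) :
  A \is unitarymx -> B \is unitarymx -> A *t B \is unitarymx.
Proof.
move=> /unitarymxP hA /unitarymxP hB; apply/unitarymxP.
by rewrite trmx_tens map_mxT tensmx_mul hA hB tensmx11.
Qed.

Lemma hermsymmx_sigma_x : sigma_x C \is hermsymmx.
Proof.
by apply/hermsymmxP => -[[|[|?]] ?] -[[|[|?]] ?] //;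
  rewrite !mxE /= ?rmorph0 ?rmorph1.
Qed.

Lemma hermsymmx_sigma_y : sigma_y C \is hermsymmx.
Proof.
apply/hermsymmxP => -[[|[|?]] ?] -[[|[|?]] ?] //; rewrite !mxE /= ?rmorph0 //.
  by rewrite conjCi.
by rewrite rmorphN /= conjCi opprK.
Qed.

Lemma hermsymmx_sigma_z : sigma_z C \is hermsymmx.
Proof.
by apply/hermsymmxP => -[[|[|?]] ?] -[[|[|?]] ?] //;
  rewrite !mxE /= ?rmorph0 ?rmorph1 ?rmorphN1.
Qed.

Lemma ptrA_ptrace (rho : 'M[C]_(2 * 2 * 2)) :
  ptrA rho = ptrace_snd (ptrace_snd rho).
Proof. by apply/matrixP => i j; rewrite !mxE; apply: eq_bigr => b _; rewrite mxE. Qed.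

Lemma ptrB_ptrace (rho : 'M[C]_(2 * 2 * 2)) :
  ptrB rho = ptrace_fst (ptrace_snd rho).
Proof. by apply/matrixP => i j; rewrite !mxE; apply: eq_bigr => a _; rewrite mxE. Qed.

Lemma ptrC_ptrace (rho : 'M[C]_(2 * 2 * 2)) : ptrC rho = ptrace_fst rho.
Proof. by apply/matrixP => i j; rewrite !mxE sum_mxtens_index. Qed.

Lemma mxtrace_on1 (rho : 'M[C]_(2 * 2 * 2)) X :
  \tr (rho *m on1 X) = \tr (ptrA rho *m X).
Proof. by rewrite ptrA_ptrace /on1 /I2 !mxtrace_mul_tens1r. Qed.

Lemma mxtrace_on2 (rho : 'M[C]_(2 * 2 * 2)) X :
  \tr (rho *m on2 X) = \tr (ptrB rho *m X).
Proof. by rewrite ptrB_ptrace /on2 /I2 mxtrace_mul_tens1r mxtrace_mul_tens1l. Qed.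

Lemma mxtrace_on3 (rho : 'M[C]_(2 * 2 * 2)) X :
  \tr (rho *m on3 X) = \tr (ptrC rho *m X).
Proof. by rewrite ptrC_ptrace /on3 /I2 tensmx11 mxtrace_mul_tens1l. Qed.

Definition local_sum (h : 'M[C]_2) : 'M[C]_(2 * 2 * 2) := on1 h + on2 h + on3 h.

Lemma local_sumZ a (h : 'M[C]_2) : local_sum (a *: h) = a *: local_sum h.
Proof. by rewrite /local_sum /on1 /on2 /on3 !(tensmxZl, tensmxZr) !scalerDr. Qed.

Lemma on1D (h g : 'M[C]_2) : on1 (h + g) = on1 h + on1 g.
Proof. by rewrite /on1 !tensmxDl. Qed.

Lemma on2D (h g : 'M[C]_2) : on2 (h + g) = on2 h + on2 g.
Proof. by rewrite /on2 tensmxDr tensmxDl. Qed.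

Lemma on3D (h g : 'M[C]_2) : on3 (h + g) = on3 h + on3 g.
Proof. by rewrite /on3 tensmxDr. Qed.

Lemma hermsymmx_local_sum (h : 'M[C]_2) :
  h \is hermsymmx -> local_sum h \is hermsymmx.
Proof.
have I2_herm : I2 C \is hermsymmx by apply: hermitian1mx_subproof.
by move=> hh; rewrite !hermsymmxD ?hermsymmx_tens.
Qed.

Lemma local_sum_conj (W1 W2 W3 h : 'M[C]_2) :
  W1 \is unitarymx -> W2 \is unitarymx -> W3 \is unitarymx ->
  (W1 *t W2 *t W3) *m local_sum h *m (W1 *t W2 *t W3)^t* =
  on1 (W1 *m h *m W1^t*) + on2 (W2 *m h *m W2^t*) + on3 (W3 *m h *m W3^t*).
Proof.
move=> /unitarymxP h1 /unitarymxP h2 /unitarymxP h3.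
rewrite !trmx_tens !map_mxT !mulmxDr !mulmxDl /on1 /on2 /on3 /I2.
by rewrite !tensmx_mul !mulmx1 h1 h2 h3.
Qed.

Lemma capacity_local_sum_ge (rho : 'M[C]_(2 * 2 * 2)) (h : 'M[C]_2) :
  rho \is hermsymmx -> h \is hermsymmx ->
  capacity (ptrA rho) h + capacity (ptrB rho) h + capacity (ptrC rho) h
    <= capacity rho (local_sum h).
Proof.
move=> hr hh.
have hA : ptrA rho \is hermsymmx.
  by rewrite ptrA_ptrace !hermsymmx_ptrace_snd.
have hB : ptrB rho \is hermsymmx.
  by rewrite ptrB_ptrace hermsymmx_ptrace_fst ?hermsymmx_ptrace_snd.
have hC : ptrC rho \is hermsymmx by rewrite ptrC_ptrace hermsymmx_ptrace_fst.
have [X1 [Y1 [hX1 hY1 ->]]] := capacity_mxtrace_conjB hA hh.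
have [X2 [Y2 [hX2 hY2 ->]]] := capacity_mxtrace_conjB hB hh.
have [X3 [Y3 [hX3 hY3 ->]]] := capacity_mxtrace_conjB hC hh.
apply: le_trans (capacity_ge_mxtrace_conjB hr (hermsymmx_local_sum hh)
  (unitarymx_tens (unitarymx_tens hX1 hX2) hX3)
  (unitarymx_tens (unitarymx_tens hY1 hY2) hY3)).
rewrite !local_sum_conj // !mulmxDr !mxtraceD !mxtrace_on1 !mxtrace_on2 !mxtrace_on3.
by rewrite le_eqVlt; apply/orP; left; apply/eqP; ring.
Qed.

End ThreeQubits.

Theorem theorem3 (C : numClosedFieldType) (E : C)
    (H0 : 'M[C]_(2 * 2 * 2)) (h : 'M[C]_2) (Hint rho : 'M[C]_(2 * 2 * 2)) :
  0 < E ->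
  (H0 = H0a E /\ h = ha E) \/ (H0 = H0b E /\ h = hb E) ->
  Hint \is hermsymmx ->
  density rho ->
  capacity rho H0 <= capacity rho (H0 + Hint) ->
  capacity (ptrA rho) h + capacity (ptrB rho) h + capacity (ptrC rho) h
    <= capacity rho (H0 + Hint).
Proof.
move=> E_gt0 H0_h _ [[rho_herm _] _] H0_le; apply: le_trans H0_le.
have E_real : E \is Num.real by apply: gtr0_real.
have [h_herm ->] : h \is hermsymmx /\ H0 = local_sum h.
  case: H0_h => -[-> ->]; split.
  - by rewrite hermsymmxZ ?hermsymmx_sigma_z.
  - by rewrite /ha local_sumZ.
  - by rewrite hermsymmxZ ?hermsymmxD ?hermsymmx_sigma_x ?hermsymmx_sigma_y.
  - by rewrite /hb local_sumZ /local_sum on1D on2D on3D.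
exact: capacity_local_sum_ge.
Qed.
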